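(* Under the rank assumptions stated in the context, let $S_{j}:=\{y+s v_j: y\in \mathrm{relint}(F_{j}), s> 0\}$. Then $S_{j}$ and $S_{k}$ are disjoint for any $j\neq k$.
   Context: Let $d\geq 3$, let $v_1,\dots,v_d\in\mathbb{R}^d$ be distinct unit vectors and $b_1,\dots,b_d$ real numbers, and let $A=\{x\in \mathbb{R}^d:\ x\cdot v_j\leq b_j\ \text{for}\ j=1,\dots, d\}$ be a (possibly unbounded) convex polytope. For each $j$, $F_j$ denotes the (possible) facet of $A$ corresponding to $v_j$ (the part of $A$ on the hyperplane $\{x: x\cdot v_j=b_j\}$), and $\mathrm{relint}$ denotes relative interior. The following rank assumptions are imposed: for any $1\leq j<k\leq d$, if $\operatorname{rank} \begin{bmatrix} v_j & v_k \end{bmatrix}<2$, then $\operatorname{rank} \begin{bmatrix} v_j & v_k\end{bmatrix}<\operatorname{rank} \begin{bmatrix} v_j & v_k\\ b_j&b_k \end{bmatrix}$; for any $1\leq j<k<l\leq d$, if $\operatorname{rank} \begin{bmatrix} v_j & v_k & v_l\end{bmatrix}<3$, then $\operatorname{rank} \begin{bmatrix} v_j & v_k & v_l\end{bmatrix}<\operatorname{rank} \begin{bmatrix} v_j & v_k & v_l\\ b_j&b_k&b_l \end{bmatrix}$; for any $1\leq j<k<l<s\leq d$, if $\operatorname{rank} \begin{bmatrix} v_j & v_k & v_l& v_s\end{bmatrix}<4$, then $\operatorname{rank} \begin{bmatrix} v_j & v_k & v_l& v_s\end{bmatrix}<\operatorname{rank} \begin{bmatrix} v_j & v_k & v_l&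 v_s\\ b_j&b_k&b_l&b_s \end{bmatrix}$. *)

From HB Require Import structures.
From mathcomp Require Import all_boot all_order all_algebra.
From mathcomp Require Import reals.
Set Implicit Arguments. Unset Strict Implicit. Unset Printing Implicit Defensive.
Import Order.TTheory GRing.Theory Num.Theory.
Local Open Scope ring_scope.

Definition dotv (R : realType) (d : nat) (x y : 'rV[R]_d) : R :=
  \sum_(i < d) x 0 i * y 0 i.

Definition normsq (R : realType) (d : nat) (x : 'rV[R]_d) : R := dotv x x.

Definition polyA (R : realType) (d : nat) (v : 'I_d -> 'rV[R]_d) (b : 'I_d -> R)
  (x : 'rV[R]_d) : Prop := forall j, dotv x (v j) <= b j.

Definition facet (R : realType) (d : nat) (v : 'I_d -> 'rV[R]_d) (b : 'I_d -> R)
  (j : 'I_d) (x : 'rV[R]_d) : Prop := polyA v b x /\ dotv x (v j) = b j.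

Definition aff_hull (R : realType) (d : nat) (F : 'rV[R]_d -> Prop)
  (x : 'rV[R]_d) : Prop :=
  exists (n : nat) (p : 'I_n -> 'rV[R]_d) (w : 'I_n -> R),
    (forall i, F (p i)) /\ \sum_(i < n) w i = 1 /\ x = \sum_(i < n) w i *: p i.

(* relative interior: points of F having a Euclidean ball (of radius sqrt e)
   whose intersection with aff(F) lies in F *)
Definition relint (R : realType) (d : nat) (F : 'rV[R]_d -> Prop)
  (x : 'rV[R]_d) : Prop :=
  F x /\ exists e : R, 0 < e /\
    forall y, aff_hull F y -> normsq (y - x) < e -> F y.

Definition Sset (R : realType) (d : nat) (v : 'I_d -> 'rV[R]_d) (b : 'I_d -> R)
  (j : 'I_d) (z : 'rV[R]_d) : Prop :=
  exists (y : 'rV[R]_d) (s : R),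
    relint (facet v b j) y /\ 0 < s /\ z = y + s *: v j.

Definition vmat (R : realType) (d m : nat) (v : 'I_d -> 'rV[R]_d)
  (f : 'I_m -> 'I_d) : 'M[R]_(d, m) := \matrix_(i < d, l < m) v (f l) 0 i.

Definition vbmat (R : realType) (d m : nat) (v : 'I_d -> 'rV[R]_d)
  (b : 'I_d -> R) (f : 'I_m -> 'I_d) : 'M[R]_(d + 1, m) :=
  col_mx (vmat v f) (\row_(l < m) b (f l)).

Definition rank_cond (R : realType) (d m : nat) (v : 'I_d -> 'rV[R]_d)
  (b : 'I_d -> R) (f : 'I_m -> 'I_d) : Prop :=
  (\rank (vmat v f) < m)%N -> (\rank (vmat v f) < \rank (vbmat v b f))%N.

(* If z = y + s v_j = y' + s' v_k with y on F_j, y' on F_k and s, s' > 0, then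
   w := y' - y = s v_j - s' v_k, and |w|^2 = s (w . v_j) - s' (w . v_k) <= 0,
   because w . v_j = y' . v_j - b_j <= 0 and w . v_k = b_k - y . v_k >= 0.
   Hence y = y' (z has a unique nearest point in A), so s v_j = s' v_k, and
   since both are unit vectors, v_j = v_k. *)
From HB Require Import structures.
From mathcomp Require Import all_boot all_order all_algebra.
From mathcomp Require Import reals.
From mathcomp Require Import lra.
Import Order.TTheory GRing.Theory Num.Theory.
Local Open Scope ring_scope.

Section DotProduct.
Context {R : realType} {d : nat}.
Implicit Types (x y z : 'rV[R]_d) (a : R).

Lemma dotvC x y : dotv x y = dotv y x.
Proof. by apply: eq_bigr => i _; rewrite mulrC. Qed.

Lemma dotvDl x y z : dotv (x + y) z = dotv x z + dotv y z.
Proof. by rewrite /dotv -big_split; apply: eq_bigr => i _; rewrite mxE mulrDl. Qed.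

Lemma dotvZl a x z : dotv (a *: x) z = a * dotv x z.
Proof. by rewrite /dotv mulr_sumr; apply: eq_bigr => i _; rewrite mxE mulrA. Qed.

Lemma dotvNl x z : dotv (- x) z = - dotv x z.
Proof. by rewrite -scaleN1r dotvZl mulN1r. Qed.

Lemma dotvBl x y z : dotv (x - y) z = dotv x z - dotv y z.
Proof. by rewrite dotvDl dotvNl. Qed.

Lemma dotvZr a x z : dotv z (a *: x) = a * dotv z x.
Proof. by rewrite dotvC dotvZl dotvC. Qed.

Lemma dotvBr x y z : dotv z (x - y) = dotv z x - dotv z y.
Proof. by rewrite dotvC dotvBl !(dotvC z). Qed.

Lemma dotvv_ge0 x : 0 <= dotv x x.
Proof. by apply: sumr_ge0 => i _; rewrite -expr2 sqr_ge0. Qed.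

Lemma dotvv_le0 x : dotv x x <= 0 -> x = 0.
Proof.
move=> x_le0; have x0 : dotv x x = 0 by apply/eqP; rewrite eq_le x_le0 dotvv_ge0.
apply/rowP => i; rewrite mxE; apply/eqP; rewrite -sqrf_eq0 expr2; apply/eqP.
by move/psumr_eq0P: x0; apply=> // l _; rewrite -expr2 sqr_ge0.
Qed.

Lemma scale_unit_inj {a a' x x'} : normsq x = 1 -> normsq x' = 1 ->
  0 < a -> 0 < a' -> a *: x = a' *: x' -> x = x'.
Proof.
rewrite /normsq => x1 x'1 a_gt0 a'_gt0 axE.
have : dotv (a *: x) (a *: x) = dotv (a' *: x') (a' *: x') by rewrite axE.
rewrite !dotvZl !dotvZr x1 x'1 => sqE.
have aa' : a = a' by nra.
by move: axE; rewrite aa'; apply: scalerI; rewrite gt_eqF.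
Qed.

End DotProduct.

Section Polytope.
Context {R : realType} {d : nat} {v : 'I_d -> 'rV[R]_d} {b : 'I_d -> R}.

Lemma facet_normal_le0 {j y y'} : facet v b j y -> polyA v b y' ->
  dotv (y' - y) (v j) <= 0.
Proof. by move=> [_ yj] /(_ j) y'j; rewrite dotvBl yj subr_le0. Qed.

Lemma facet_shift_eq {j k y y' s s'} : facet v b j y -> facet v b k y' ->
  0 <= s -> 0 <= s' -> y + s *: v j = y' + s' *: v k -> y = y'.
Proof.
move=> Fy Fy' s_ge0 s'_ge0 zE.
have wE : y' - y = s *: v j - s' *: v k.
  by rewrite -(addrK (s' *: v k) y') -zE [y + _]addrC addrAC addrK.
have wj := facet_normal_le0 Fy Fy'.1.
have wk := facet_normal_le0 Fy' Fy.1; rewrite -opprB dotvNl oppr_le0 in wk.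
suff /dotvv_le0/eqP : dotv (y' - y) (y' - y) <= 0 by rewrite subr_eq0 => /eqP.
by rewrite {2}wE dotvBr !dotvZr; nra.
Qed.

End Polytope.

Theorem lemma6p2 (R : realType) (d : nat) (hd : (3 <= d)%N)
  (v : 'I_d -> 'rV[R]_d) (b : 'I_d -> R)
  (v_inj : injective v) (v_unit : forall j, normsq (v j) = 1)
  (rank2 : forall j k : 'I_d, (j < k)%N ->
     rank_cond v b (tnth [tuple j; k]))
  (rank3 : forall j k l : 'I_d, (j < k)%N -> (k < l)%N ->
     rank_cond v b (tnth [tuple j; k; l]))
  (rank4 : forall j k l s : 'I_d, (j < k)%N -> (k < l)%N -> (l < s)%N ->
     rank_cond v b (tnth [tuple j; k; l; s])) :
  forall j k : 'I_d, j != k ->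
    forall z : 'rV[R]_d, ~ (Sset v b j z /\ Sset v b k z).
Proof.
move=> j k njk z [[y [s [[Fy _] [s_gt0 ->]]]] [y' [s' [[Fy' _] [s'_gt0 zE]]]]].
have yy' := facet_shift_eq Fy Fy' (ltW s_gt0) (ltW s'_gt0) zE.
move: zE; rewrite yy' => /addrI /(scale_unit_inj (v_unit j) (v_unit k) s_gt0 s'_gt0).
by move/v_inj/eqP; rewrite (negPf njk).
Qed.
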